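(* Let $4 \le r \le n-1$ and let $m \in \{r,r-1,r-2\}$. If $m<n-1$, then \[\sum_{j=0}^{r-1} \binom{m}{j} \binom{n-m-1}{r-j-1} 2^{r-j-1} > 1 + \binom{n-1}{r-1}.\] If $m=n-1$, then \[\sum_{j=0}^{r-1} \binom{m}{j} \binom{n-m-1}{r-j-1} 2^{r-j-1} = \binom{n-1}{r-1}.\]
   Context: Binomial coefficients $\binom{a}{b}$ are $0$ when $b<0$ or $b>a$. *)

From mathcomp Require Import all_boot.

(* Put k := n - 1 - m, so that m + k = n - 1.  By Vandermonde's identity the
   sum with every power of 2 replaced by 1 is exactly C(n-1, r-1).  When k = 0
   only the term j = r - 1, whose weight is 2^0 = 1, survives.  When k > 0 the
   term j = r - 2 alone exceeds its unweighted value by C(m, r-2) * k, which is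
   at least 2 because m >= r - 2. *)

From mathcomp Require Import all_boot.
From mathcomp Require Import zify.

Lemma leq_succ_bin m p : p < m -> p.+1 <= 'C(m, p).
Proof. by move=> lt_pm; rewrite -binSn leq_bin2l. Qed.

Lemma Vandermonde_exp2_ge m k p :
  'C(m + k, p.+1) + 'C(m, p) * k <=
    \sum_(j < p.+2) 'C(m, j) * 'C(k, p.+1 - j) * 2 ^ (p.+1 - j).
Proof.
rewrite -Vandermonde !big_ord_recr /= subnn subSnn bin1 bin0 expn0 expn1 !muln1.
rewrite -!addnA leq_add //; last by lia.
by apply: leq_sum => j _; rewrite leq_pmulr ?expn_gt0.
Qed.

Lemma Vandermonde_exp2_bin0 m p :
  \sum_(j < p.+1) 'C(m, j) * 'C(0, p - j) * 2 ^ (p - j) = 'C(m, p).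
Proof.
rewrite big_ord_recr /= subnn bin0 expn0 !muln1 big1 ?add0n // => j _.
by rewrite bin0n subn_eq0 leqNgt ltn_ord muln0 mul0n.
Qed.

Theorem lemma9p2 (n r m : nat) :
  4 <= r -> r <= n - 1 -> m \in [:: r; r - 1; r - 2] ->
  (m < n - 1 ->
     1 + 'C(n - 1, r - 1) <
       \sum_(0 <= j < r) 'C(m, j) * 'C(n - m - 1, r - j - 1) * 2 ^ (r - j - 1))
  /\
  (m = n - 1 ->
     \sum_(0 <= j < r) 'C(m, j) * 'C(n - m - 1, r - j - 1) * 2 ^ (r - j - 1)
       = 'C(n - 1, r - 1)).
Proof.
move=> r_ge4 r_le hm.
have [p r_eq] : exists p, r = p.+2 by exists (r - 2); lia.
subst r; rewrite !inE !subSS !subn0 in hm.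
have m_le : m <= n - 1 by case/or3P: hm => /eqP ->; lia.
have mk : m + (n - m - 1) = n - 1 by lia.
set k := n - m - 1 in mk *.
have -> : \sum_(0 <= j < p.+2) 'C(m, j) * 'C(k, p.+2 - j - 1) * 2 ^ (p.+2 - j - 1)
        = \sum_(j < p.+2) 'C(m, j) * 'C(k, p.+1 - j) * 2 ^ (p.+1 - j).
  by rewrite big_mkord; apply: eq_bigr => j _; rewrite subnAC subn1.
rewrite subSS subn0 -mk; split => [m_lt | m_eq].
- have excess : 2 <= 'C(m, p) * k.
    case/or3P: hm => /eqP m_eq; rewrite /k.
    1,2: by have := @leq_succ_bin m p; nia.
    by rewrite m_eq binn; lia.
  by have := Vandermonde_exp2_ge m k p; lia.
- have -> : k = 0 by rewrite /k; lia.
  by rewrite addn0 Vandermonde_exp2_bin0.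
Qed.
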